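(* Let $\varphi:X\to\mathbb R$ be Lipschitz continuous. Every calibrated subaction $u$ of $\varphi$ satisfies \[u(\underline{y})=\inf_{\underline{x}\in\Omega_\varphi}\big(H_\varphi(\underline{x},\underline{y})+u(\underline{x})\big)\quad\text{for every }\underline{y}\in X.\]
   Context: $X=[0,1]^{\mathbb N_0}$ with metric $d_X(\underline{x},\underline{y})=\sum_{i\ge0}|x_i-y_i|/2^{i+1}$ and shift $\sigma(\underline{x})_i=x_{i+1}$. $\alpha_\varphi=\inf_\mu\int\varphi\,d\mu$ over $\sigma$-invariant Borel probability measures. $B(\underline{x},\underline{y},n;\varepsilon)=\{\underline{z}: d_X(\underline{x},\underline{z})<\varepsilon,\ d_X(\sigma^n\underline{z},\underline{y})<\varepsilon\}$. Mañé potential $S_\varphi(\underline{x},\underline{y})=\lim_{\varepsilon\to0}\inf\{\sum_{i=0}^{n-1}(\varphi(\sigma^i\underline{z})-\alpha_\varphi): n\in\mathbb N,\ \underline{z}\in B(\underline{x},\underline{y},n;\varepsilon)\}$; Peierls barrier $H_\varphi(\underline{x},\underline{y})=\lim_{\varepsilon\to0}\liminf_{n\to\infty}\inf\{\sum_{i=0}^{n-1}(\varphi(\sigma^i\underline{z})-\alpha_\varphi): \underline{z}\in B(\underline{x},\underline{y},n;\varepsilon)\}\in\mathbb R\cup\{+\infty\}$; Aubry set $\Omega_\varphi=\{\underline{x}: S_\varphi(\underline{x},\underline{x})=0\}$. A subaction of $\varphi$ is a continuous $u:X\to\mathbb R$ with $u(\underline{x})+\varphi(\underline{x})\ge u(\sigma\underline{x})+\alpha_\varphi$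 for all $\underline{x}$; it is calibrated if moreover $\min_{\sigma(\underline{y})=\underline{x}}(\varphi(\underline{y})+u(\underline{y}))=u(\underline{x})+\alpha_\varphi$ for every $\underline{x}\in X$. *)

From HB Require Import structures.
From mathcomp Require Import all_boot all_order all_algebra.
From mathcomp Require Import all_classical all_reals all_analysis.
Set Implicit Arguments. Unset Strict Implicit. Unset Printing Implicit Defensive.
Import Order.TTheory GRing.Theory Num.Theory.
Local Open Scope classical_set_scope.
Local Open Scope ring_scope.

Section Shift.
Variable R : realType.

Record Xt := MkX { xval : nat -> R ; xprop : forall i, 0 <= xval i <= 1 }.

Lemma x0_prop : forall i : nat, 0 <= (fun _ : nat => (0:R)) i <= 1.
Proof. by move=> i; rewrite lexx ler01. Qed.

HB.instance Definition _ := gen_eqMixin Xt.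
HB.instance Definition _ := gen_choiceMixin Xt.
HB.instance Definition _ := isPointed.Build Xt (MkX x0_prop).

Definition dX (x y : Xt) : R :=
  limn (fun n : nat => \sum_(0 <= i < n) (`|xval x i - xval y i| / 2 ^+ i.+1)).

Definition shift (x : Xt) : Xt := MkX (fun i => xprop x i.+1).

Definition dX_open (A : set Xt) : Prop :=
  forall x, A x -> exists2 e : R, 0 < e & forall z, dX x z < e -> A z.

Definition XB := g_sigma_algebraType dX_open.

Definition invariant (mu : probability XB R) : Prop :=
  forall A : set XB, measurable A -> mu (shift @^-1` A) = mu A.

Definition alpha (phi : Xt -> R) : R :=
  fine (ereal_inf [set (\int[mu]_x (phi x)%:E)%E | mu in [set mu | invariant mu]]).

Definition Bset (x y : Xt) (n : nat) (eps : R) : set Xt :=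
  [set z | dX x z < eps /\ dX (iter n shift z) y < eps].

Definition birk (phi : Xt -> R) (n : nat) (z : Xt) : R :=
  \sum_(0 <= i < n) (phi (iter i shift z) - alpha phi).

Definition mane (phi : Xt -> R) (x y : Xt) : \bar R :=
  lim ((fun eps : R => ereal_inf
          [set r | exists n, exists z, (0 < n)%N /\ Bset x y n eps z /\ r = (birk phi n z)%:E])
       @ 0^'+).

Definition peierls (phi : Xt -> R) (x y : Xt) : \bar R :=
  lim ((fun eps : R => limn_einf (fun n : nat =>
          ereal_inf [set (birk phi n z)%:E | z in Bset x y n eps]))
       @ 0^'+).

Definition aubry (phi : Xt -> R) : set Xt := [set x | mane phi x x = 0%E].

Definition dX_continuous (u : Xt -> R) : Prop :=
  forall x (e : R), 0 < e -> exists2 d : R, 0 < d &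
    forall z, dX x z < d -> `|u x - u z| < e.

Definition dX_lipschitz (phi : Xt -> R) : Prop :=
  exists L : R, forall x y, `|phi x - phi y| <= L * dX x y.

Definition subaction (phi u : Xt -> R) : Prop :=
  dX_continuous u /\ forall x, u x + phi x >= u (shift x) + alpha phi.

Definition calibrated_subaction (phi u : Xt -> R) : Prop :=
  subaction phi u /\
  forall x, (exists2 y, shift y = x & phi y + u y = u x + alpha phi) /\
            (forall y, shift y = x -> u x + alpha phi <= phi y + u y).

End Shift.

From Pilot Require Import Defs.
From HB Require Import structures.
From mathcomp Require Import all_boot all_order all_algebra.
From mathcomp Require Import all_classical all_reals all_analysis.
From mathcomp Require Import ring lra.
Import Order.TTheory GRing.Theory Num.Theory numFieldNormedType.Exports.
Local Open Scope classical_set_scope.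
Local Open Scope ring_scope.

(** Follow a calibrated backward orbit [y = y_0, y_1, y_2, ...] of [y]: [σ y_(n+1) = y_n] and
    [φ(y_(n+1)) + u(y_(n+1)) = u(y_n) + α], so the Birkhoff sum of length [k] starting at
    [y_(n+k)] telescopes to [u(y_n) - u(y_(n+k))].  By compactness of [X] the orbit has a
    cluster point [x_0], and its returns near [x_0] give [S(x_0, x_0) <= 0] and
    [H(x_0, y) <= u(y) - u(x_0)].  Conversely, summing the subaction inequality along an
    orbit segment and using continuity of [u] gives [S(x, y), H(x, y) >= u(y) - u(x)] for
    all [x, y].  Hence [x_0] lies in the Aubry set and realises the infimum, which equals
    [u(y)]. *)

Section Metric.
Context {R : realType}.
Local Notation X := (Xt R).

Definition dX_partial (x z : X) (n : nat) : R :=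
  \sum_(0 <= i < n) (`|xval x i - xval z i| / 2 ^+ i.+1).

Lemma dX_sym (x y : X) : dX x y = dX y x.
Proof.
rewrite /dX; congr (limn _); apply: funext => n.
by apply: eq_bigr => i _; rewrite distrC.
Qed.

Lemma dX_xx (x : X) : dX x x = 0.
Proof.
rewrite /dX (_ : (fun n => _) = fun _ => 0) ?lim_cst //.
by apply: funext => n; rewrite big1 // => i _; rewrite subrr normr0 mul0r.
Qed.

Lemma sum_inv_pow2 (k m : nat) : (k <= m)%N ->
  \sum_(k <= i < m) ((2:R) ^+ i.+1)^-1 = (2 ^+ k)^-1 - (2 ^+ m)^-1.
Proof.
elim: m => [|m IH]; first by rewrite leqn0 => /eqP ->; rewrite big_geq // subrr.
rewrite leq_eqVlt => /orP[/eqP ->|]; first by rewrite big_geq // subrr.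
rewrite ltnS => km; rewrite big_nat_recr //= IH // exprS.
by field; rewrite !expf_neq0.
Qed.

Lemma dX_term_ge0 (x z : X) i : 0 <= `|xval x i - xval z i| / (2:R) ^+ i.+1.
Proof. by rewrite divr_ge0. Qed.

Lemma dX_term_le (x z : X) i :
  `|xval x i - xval z i| / (2:R) ^+ i.+1 <= ((2:R) ^+ i.+1)^-1.
Proof.
rewrite -[leRHS]mul1r ler_wpM2r ?invr_ge0 ?exprn_ge0 //.
move: (xprop x i) (xprop z i) => /andP[? ?] /andP[? ?].
by rewrite ler_norml; apply/andP; split; lra.
Qed.

Lemma is_cvgn_dX_partial (x z : X) : cvgn (dX_partial x z).
Proof.
apply: nondecreasing_is_cvgn.
  move=> n m nm; rewrite /dX_partial (big_cat_nat (leq0n n) nm) /= lerDl.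
  by apply: sumr_ge0 => i _; exact: dX_term_ge0.
exists 1 => _ [n _ <-]; apply: le_trans (_ : \sum_(0 <= i < n) ((2:R) ^+ i.+1)^-1 <= 1).
  by apply: ler_sum => i _; exact: dX_term_le.
by rewrite sum_inv_pow2 // expr0 invr1 lerBlDr lerDl invr_ge0 exprn_ge0.
Qed.

Lemma dX_le_prefix (x z : X) (N : nat) (eta : R) : 0 <= eta ->
  (forall i, (i < N)%N -> `|xval x i - xval z i| <= eta) ->
  dX x z <= eta + (2 ^+ N)^-1.
Proof.
move=> eta0 close; apply: limr_le; first exact: is_cvgn_dX_partial.
exists N => // m /= Nm; rewrite /dX_partial (big_cat_nat (leq0n N) Nm) /=.
apply: lerD.
  apply: le_trans (_ : \sum_(0 <= i < N) (eta * ((2:R) ^+ i.+1)^-1) <= _).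
    rewrite big_nat_cond [leRHS]big_nat_cond.
    apply: ler_sum => i /andP[/andP[_ iN] _].
    by rewrite ler_wpM2r ?invr_ge0 ?exprn_ge0 ?close.
  by rewrite -mulr_sumr sum_inv_pow2 // expr0 invr1 ler_piMr //
    lerBlDr lerDl ?invr_ge0 ?exprn_ge0.
apply: le_trans (_ : \sum_(N <= i < m) ((2:R) ^+ i.+1)^-1 <= _).
  by apply: ler_sum => i _; exact: dX_term_le.
by rewrite sum_inv_pow2 // lerBlDr lerDl invr_ge0 exprn_ge0.
Qed.

Lemma exists_inv_pow2_lt {e : R} : 0 < e -> exists M : nat, (2 ^+ M)^-1 < e.
Proof.
move=> e0; set M := Num.Def.archi_bound e^-1; exists M.
rewrite -[e]invrK ltf_pV2 ?posrE ?exprn_gt0 ?invr_gt0 //.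
apply: lt_trans (archi_boundP _) _; first by rewrite invr_ge0 ltW.
by rewrite -natrX ltr_nat ltn_expl.
Qed.

Definition dX_cluster (s : nat -> X) (x : X) : Prop :=
  forall e, 0 < e -> forall N, exists2 n, (N <= n)%N & dX x (s n) < e.

Lemma segment01_compact : compact [set x : R | 0 <= x <= 1].
Proof.
have := @segment_compact R 0 1.
by congr compact; apply/seteqP; split => x /=; rewrite in_itv.
Qed.

(* With [fun _ => R] itself as the family of factors, unification diverges in [nbhs_prefix]. *)
Let R_topology : nat -> topologicalType := fun _ => Topological.clone R _.

Lemma nbhs_prefix (p : prod_topology R_topology) K {eta : R} : 0 < eta ->
  nbhs p [set f | forall i, (i < K)%N -> `|p i - f i| < eta].
Proof.
move=> eta0; elim: K => [|K IH]; first by apply: filterS filterT => f _ i.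
have nbK : nbhs p (proj K @^-1` ball (p K) eta).
  by have := @proj_continuous nat _ K p _ (nbhsx_ballx (p K) eta eta0); apply.
apply: filterS (filterI IH nbK) => f [close fK] i; rewrite ltnS leq_eqVlt.
by case/orP => [/eqP ->|]; [exact: fK | exact: close].
Qed.

(* Tychonoff gives a cluster point in the product topology; by [dX_le_prefix] it is
   also a cluster point for [d_X]. *)
Lemma dX_cluster_exists (s : nat -> X) : exists x, dX_cluster s x.
Proof.
have cpt := @tychonoff nat R_topology _ (fun _ => segment01_compact).
pose g : nat -> prod_topology R_topology := fun n => xval (s n).
have [] := cpt (g @ \oo) _ _; first by exists 0%N => // n _; exact: xprop.
move=> p [p01 clp]; exists (MkX p01) => e e0 N.
have e30 : 0 < e / 3 by rewrite divr_gt0.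
have [M HM] := exists_inv_pow2_lt e30.
have nb := nbhs_prefix p M e30.
have [|q [[n [Nn ->]] close]] := clp [set q | exists n, (N <= n)%N /\ q = g n] _ _ nb.
  by exists N => // n /= Nn; exists n.
exists n => //; apply: le_lt_trans (dX_le_prefix _ _ M _ (ltW e30) _) _; last by lra.
by move=> i iM; apply: ltW; exact: close.
Qed.

End Metric.

Section ExtendedLimits.
Context {R : realType}.
Local Open Scope ereal_scope.

Lemma nonincreasing_lim_at_right0 (F : R -> \bar R) :
  (forall a b : R, (0 < a)%R -> (a <= b)%R -> F b <= F a) ->
  lim (F @ 0^'+) = ereal_sup [set F e | e in [set e : R | (0 < e)%R]].
Proof.
move=> Fnoninc.
rewrite (cvg_lim _ (@nonincreasing_at_right_cvge _ F 0%R (BInfty R false) isT _)) //.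
  by congr ereal_sup; apply/seteqP; split => _ [e He <-]; exists e;
    move: He; rewrite /= ?in_itv /= ?andbT.
by move=> a b; rewrite !in_itv /= !andbT => a0 _ ab; exact: Fnoninc.
Qed.

Lemma ereal_sup_pos_ge (F : R -> \bar R) (c : R) :
  (forall d, (0 < d)%R -> exists2 e, (0 < e)%R & (c - d)%:E <= F e) ->
  c%:E <= ereal_sup [set F e | e in [set e : R | (0 < e)%R]].
Proof.
move=> approx; apply/lee_addgt0Pr => d d0; have [e e0 ledF] := approx d d0.
rewrite -(subrK d c) EFinD; apply: leeD2r; apply: le_trans ledF _.
by apply: ereal_sup_ubound; exists e.
Qed.

Lemma limn_einf_ge (a : (\bar R)^nat) c : (forall n, c <= a n) -> c <= limn_einf a.
Proof.
move=> ge_c; rewrite limn_einf_lim; apply: lime_ge; first exact: is_cvg_einfs.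
by apply: nearW => n; apply: le_ereal_inf_tmp => _ [k _ <-].
Qed.

Lemma limn_einf_le_often (a : (\bar R)^nat) c :
  (forall N, exists2 n, (N <= n)%N & a n <= c) -> limn_einf a <= c.
Proof.
move=> often; rewrite limn_einf_lim; apply: lime_le; first exact: is_cvg_einfs.
apply: nearW => N; have [n Nn le_c] := often N; apply: le_trans le_c.
by apply: ereal_inf_lbound; exists n.
Qed.

Lemma le_limn_einf (a b : (\bar R)^nat) :
  (forall n, a n <= b n) -> limn_einf a <= limn_einf b.
Proof.
move=> le_ab; rewrite !limn_einf_lim; apply: lee_lim; try exact: is_cvg_einfs.
apply: nearW => n; apply: le_ereal_inf_tmp => _ [k Hk <-].
by apply: le_trans (le_ab k); apply: ereal_inf_lbound; exists k.
Qed.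

End ExtendedLimits.

Section Potentials.
Context {R : realType} {phi : Xt R -> R}.
Local Notation X := (Xt R).
Local Notation shift := (@Defs.shift R).

Definition mane_eps (x y : X) (eps : R) : \bar R :=
  ereal_inf [set r | exists n, exists z,
    (0 < n)%N /\ Bset x y n eps z /\ r = (birk phi n z)%:E].

Definition peierls_eps (x y : X) (eps : R) : \bar R :=
  limn_einf (fun n => ereal_inf [set (birk phi n z)%:E | z in Bset x y n eps]).

Lemma Bset_le (x y : X) n (a b : R) : a <= b -> Bset x y n a `<=` Bset x y n b.
Proof. by move=> ab z [xz yz]; split; apply: lt_le_trans ab. Qed.

Lemma mane_epsE (x y : X) :
  mane phi x y = ereal_sup [set mane_eps x y e | e in [set e | 0 < e]].
Proof.
apply: nonincreasing_lim_at_right0 => a b _ ab.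
apply: le_ereal_inf_tmp => r [n [z [n0 [Bz ->]]]].
by apply: ereal_inf_lbound; exists n, z; split => //; split => //; exact: Bset_le Bz.
Qed.

Lemma peierls_epsE (x y : X) :
  peierls phi x y = ereal_sup [set peierls_eps x y e | e in [set e | 0 < e]].
Proof.
apply: nonincreasing_lim_at_right0 => a b _ ab.
apply: le_limn_einf => n; apply: le_ereal_inf_tmp => _ [z Bz <-].
by apply: ereal_inf_lbound; exists z => //; exact: Bset_le Bz.
Qed.

Lemma birk0 (z : X) : birk phi 0 z = 0.
Proof. by rewrite /birk big_geq. Qed.

Lemma birkS n (z : X) :
  birk phi n.+1 z = birk phi n z + (phi (iter n shift z) - alpha phi).
Proof. by rewrite /birk big_nat_recr. Qed.

Section Subaction.
Context {u : X -> R}.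
Hypotheses (u_cont : dX_continuous u)
  (u_sub : forall x, u (shift x) + alpha phi <= u x + phi x).

Lemma birk_ge_subaction n (z : X) : u (iter n shift z) - u z <= birk phi n z.
Proof.
elim: n => [|n IH]; first by rewrite birk0 /= subrr.
rewrite birkS iterS; have := u_sub (iter n shift z); lra.
Qed.

Lemma birk_ge_Bset (x y : X) (d : R) : 0 < d -> exists2 eps, 0 < eps &
  forall n z, Bset x y n eps z -> u y - u x - d <= birk phi n z.
Proof.
move=> d0; have d20 : 0 < d / 2 by rewrite divr_gt0.
have [dx dx0 ux] := u_cont x _ d20; have [dy dy0 uy] := u_cont y _ d20.
exists (Num.min dx dy); first by rewrite lt_min dx0 dy0.
move=> n z []; rewrite !lt_min => /andP[/ux xz _] /andP[_]; rewrite dX_sym => /uy yz.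
have := birk_ge_subaction n z.
by move: xz yz; rewrite !ltr_norml => /andP[? ?] /andP[? ?]; lra.
Qed.

Lemma mane_ge (x y : X) : ((u y - u x)%:E <= mane phi x y)%E.
Proof.
rewrite mane_epsE; apply: ereal_sup_pos_ge => d /(birk_ge_Bset x y)[eps eps0 ge_d].
exists eps => //; apply: le_ereal_inf_tmp => _ [n [z [_ [Bz ->]]]].
by rewrite lee_fin ge_d.
Qed.

Lemma peierls_ge (x y : X) : ((u y - u x)%:E <= peierls phi x y)%E.
Proof.
rewrite peierls_epsE; apply: ereal_sup_pos_ge => d /(birk_ge_Bset x y)[eps eps0 ge_d].
exists eps => //; apply: limn_einf_ge => n; apply: le_ereal_inf_tmp => _ [z Bz <-].
by rewrite lee_fin ge_d.
Qed.

End Subaction.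

Section BackwardOrbit.
Context {u : X -> R} {yb : nat -> X}.
Hypotheses (u_cont : dX_continuous u) (yb_shift : forall n, shift (yb n.+1) = yb n)
  (yb_calibrated : forall n, phi (yb n.+1) + u (yb n.+1) = u (yb n) + alpha phi).

Lemma iter_shift_backward k n : iter k shift (yb (n + k)) = yb n.
Proof. by elim: k => [|k IH]; rewrite ?addn0 // addnS iterSr yb_shift. Qed.

Lemma birk_backward k n : birk phi k (yb (n + k)) = u (yb n) - u (yb (n + k)).
Proof.
elim: k n => [|k IH] n; first by rewrite birk0 addn0 subrr.
rewrite birkS -addSnnS IH iter_shift_backward; have := yb_calibrated n; lra.
Qed.

Context {x0 : X}.
Hypothesis x0_cluster : dX_cluster yb x0.

Lemma peierls_cluster_le : (peierls phi x0 (yb 0%N) <= (u (yb 0%N) - u x0)%:E)%E.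
Proof.
rewrite peierls_epsE; apply: ge_ereal_sup => _ [eps eps0 <-].
apply/lee_addgt0Pr => d d0; have [dd dd0 u_near] := u_cont x0 _ d0.
apply: limn_einf_le_often => N.
have [|n Nn] := x0_cluster (Num.min eps dd) _ N; first by rewrite lt_min eps0 dd0.
rewrite lt_min => /andP[near_eps /u_near near_dd]; exists n => //.
apply: le_trans (_ : (birk phi n (yb n))%:E <= _)%E.
  apply: ereal_inf_lbound; exists (yb n) => //; split => //.
  by have := iter_shift_backward n 0%N; rewrite add0n => ->; rewrite dX_xx.
have := birk_backward n 0%N; rewrite add0n => ->.
by rewrite -EFinD lee_fin; move: near_dd; rewrite ltr_norml => /andP[? ?]; lra.
Qed.

(* Two returns [k < l] of the orbit near [x_0]: the segment from [y_l] to [y_k] starts and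
   ends near [x_0] and has Birkhoff sum [u(y_k) - u(y_l)], which is close to [0]. *)
Lemma mane_cluster_le0 : (mane phi x0 x0 <= 0)%E.
Proof.
rewrite mane_epsE; apply: ge_ereal_sup => _ [eps eps0 <-].
apply/lee_addgt0Pr => d d0; rewrite add0e.
have [dd dd0 u_near] := u_cont x0 _ (divr_gt0 d0 (ltr0n _ 2)).
have m0 : 0 < Num.min eps dd by rewrite lt_min eps0 dd0.
have [k _] := x0_cluster _ m0 0%N; rewrite lt_min => /andP[k_eps /u_near k_dd].
have [l kl] := x0_cluster _ m0 k.+1; rewrite lt_min => /andP[l_eps /u_near l_dd].
rewrite -(subnKC (ltnW kl)) in l_eps l_dd *.
apply: le_trans (_ : (birk phi (l - k) (yb (k + (l - k))))%:E <= _)%E.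
  apply: ereal_inf_lbound; exists (l - k)%N, (yb (k + (l - k))).
  by rewrite subn_gt0 kl; do 2!split => //; split => //=; rewrite iter_shift_backward dX_sym.
rewrite birk_backward lee_fin.
by move: k_dd l_dd; rewrite !ltr_norml => /andP[? ?] /andP[? ?]; lra.
Qed.

End BackwardOrbit.

Lemma calibrated_backward_orbit {u : X -> R} (y : X) : calibrated_subaction phi u ->
  exists yb : nat -> X, [/\ yb 0%N = y, forall n, shift (yb n.+1) = yb n &
    forall n, phi (yb n.+1) + u (yb n.+1) = u (yb n) + alpha phi].
Proof.
move=> [_ cal].
have /choice[pre pre_cal] : forall x, exists z, shift z = x /\ phi z + u z = u x + alpha phi.
  by move=> x; have [[z ? ?] _] := cal x; exists z.
by exists (fun n => iter n pre y); split => // n; have [] := pre_cal (iter n pre y).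
Qed.

End Potentials.

Theorem theorem2p12 (R : realType) (phi : Xt R -> R) (u : Xt R -> R) :
  dX_lipschitz phi -> calibrated_subaction phi u ->
  forall y : Xt R,
    (u y)%:E = ereal_inf [set (peierls phi x y + (u x)%:E)%E | x in aubry phi].
Proof.
move=> _ cal y; have [[u_cont u_sub] _] := cal.
have [yb [<- yb_shift yb_cal]] := calibrated_backward_orbit y cal.
have [x0 x0_cluster] := dX_cluster_exists yb.
have x0_aubry : aubry phi x0.
  apply/eqP; rewrite eq_le (mane_cluster_le0 u_cont yb_shift yb_cal x0_cluster).
  by have := mane_ge u_cont u_sub x0 x0; rewrite subrr.
apply/eqP; rewrite eq_le; apply/andP; split.
  apply: le_ereal_inf_tmp => _ [x _ <-].
  by rewrite -(subrK (u x) (u (yb 0%N))) EFinD leeD2r // (peierls_ge u_cont u_sub).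
apply: (@le_trans _ _ (peierls phi x0 (yb 0%N) + (u x0)%:E)%E).
  by apply: ereal_inf_lbound; exists x0.
rewrite -(subrK (u x0) (u (yb 0%N))) EFinD leeD2r //.
exact: (peierls_cluster_le u_cont yb_shift yb_cal x0_cluster).
Qed.
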